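(* Consider an instance of the max-min fair curriculum-based course timetabling (MMF-CB-CTT) problem with set of courses $C$, set of rooms $R$, set of periods $P$ and curricula $U\subseteq\mathcal{P}(C)$. Fix a period $p\in P$ and a feasible timetable in which the set $C_p$ of courses scheduled in $p$ is fixed, and everything except the rooms of the courses in $C_p$ is fixed; assume (adding dummy courses or dummy rooms if necessary) $|C_p|=|R|$. For $e\in C_p$ let $U_e=\{u\in U: e\in u\}$, and for $r\in R$ and $u\in U_e$ let $c_{e\to r}(u)$ denote the penalty $c(u,\tau)$ of curriculum $u$ in the completed timetable $\tau$ when $e$ is assigned to room $r$. Then the problem of choosing the room assignment for the courses of $C_p$ so that the resulting allocation vector is max-min fair (among all room assignments for period $p$ with the rest fixed) is equivalent to the GLBOP whose ground set is the edge set $E=\{\{e,r\}: e\in C_p, r\in R\}$ of the complete bipartite graph on $C_p\cup R$, whose feasible solutions are the perfect matchings of this graph, and whose weights are the multisets $w(e,r)=\biguplus_{u\in U_e}\{c_{e\to r}(u)\}$; i.e. the room assignment subproblem is $$\min_{\preceq}\ \biguplus_{\{e,r\}\in S} w(e,r)\quad\text{s.t. } S \text{ a perfect matching}.$$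
   Context: CB-CTT: courses consist of events to be assigned to resources (period, room); each curriculum is a set of courses no two of which may be taught in the same period (hard constraint), so each curriculum contains at most one course of $C_p$. The penalty $c(u,\tau)=\sum_{i=1}^4 c_{Si}(u,\tau)$ of curriculum $u$ in timetable $\tau$ is the CB-CTT objective (sum of weighted penalties for soft constraints RoomCapacity, MinWorkingDays, IsolatedLectures, RoomStability) restricted to events of courses in $u$. The allocation vector of $\tau$ is $A(\tau)=(c(u_1,\tau),\dots,c(u_k,\tau))$ for curricula $u_1,\dots,u_k$; $\tau$ is max-min fair if $A(\tau)$ sorted non-increasingly is lexicographically minimal among feasible timetables. GLBOP and the comparison $\preceq$ of multisets: sort the multisets non-increasingly and compare the sequences lexicographically, where a proper prefix is smaller; the GLBOP asks for a feasible solution $S$ minimizing $\biguplus_{e\in S}w(e)$ with respect to $\preceq$. *)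

From mathcomp Require Import all_boot.
Set Implicit Arguments. Unset Strict Implicit. Unset Printing Implicit Defensive.

(* An instance of CB-CTT: courses, rooms, periods, events (= lectures). *)
Record instance (Course Room Period Event : finType) := Instance {
  course_of : Event -> Course;
  students  : Course -> nat;
  min_days  : Course -> nat;
  teacher   : Course -> nat;
  available : Course -> Period -> bool;
  capacity  : Room -> nat;
  day_of    : Period -> nat;
  slot_of   : Period -> nat;
  curricula : {set {set Course}};
  wRC : nat; wMWD : nat; wIL : nat; wRS : nat
}.

Section CBCTT.
Variables (Course Room Period Event : finType).
Variable I : instance Course Room Period Event.

Definition timetable := Event -> Period * Room.

Definition adjacent (q q' : Period) : bool :=
  (day_of I q == day_of I q') &&
  (((slot_of I q).+1 == slot_of I q') || ((slot_of I q').+1 == slot_of I q)).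

Definition feasible (tau : timetable) : Prop :=
  (forall ev ev', ev != ev' -> course_of I ev = course_of I ev' -> (tau ev).1 != (tau ev').1) /\
  (forall ev ev', ev != ev' -> tau ev != tau ev') /\
  (forall ev ev', course_of I ev != course_of I ev' ->
     ((exists2 u, u \in curricula I & (course_of I ev \in u) && (course_of I ev' \in u))
      \/ teacher I (course_of I ev) = teacher I (course_of I ev')) ->
     (tau ev).1 != (tau ev').1) /\
  (forall ev, available I (course_of I ev) (tau ev).1).

Definition pen_RC (u : {set Course}) (tau : timetable) : nat :=
  \sum_(ev | course_of I ev \in u) (students I (course_of I ev) - capacity I (tau ev).2).

Definition pen_MWD (u : {set Course}) (tau : timetable) : nat :=
  \sum_(c in u) (min_days I c -
     size (undup [seq day_of I (tau ev).1 | ev <- enum Event & course_of I ev == c])).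

Definition pen_IL (u : {set Course}) (tau : timetable) : nat :=
  \sum_(ev | course_of I ev \in u)
     ~~ [exists ev', (course_of I ev' \in u) && adjacent (tau ev).1 (tau ev').1].

Definition pen_RS (u : {set Course}) (tau : timetable) : nat :=
  \sum_(c in u) (#|[set (tau ev).2 | ev in [pred ev | course_of I ev == c]]| - 1).

Definition penalty (u : {set Course}) (tau : timetable) : nat :=
  wRC I * pen_RC u tau + wMWD I * pen_MWD u tau + wIL I * pen_IL u tau + wRS I * pen_RS u tau.

(* Allocation vector A(tau), as a multiset (a seq up to permutation). *)
Definition alloc (tau : timetable) : seq nat :=
  [seq penalty u tau | u <- enum (curricula I)].

End CBCTT.

Fixpoint lexle (s t : seq nat) : bool :=
  match s, t with
  | [::], _ => true
  | _ :: _, [::] => false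
  | x :: s', y :: t' => (x < y) || ((x == y) && lexle s' t')
  end.

Definition msle (s t : seq nat) : bool := lexle (sort geq s) (sort geq t).

Section Subproblem.
Variables (Course Room Period Event : finType).
Variable I : instance Course Room Period Event.
Variables (tau0 : timetable Room Period Event) (p : Period).

Definition Cp : {set Course} :=
  [set course_of I ev | ev in [pred ev | (tau0 ev).1 == p]].

Definition room_reassignment (tau : timetable Room Period Event) : Prop :=
  feasible I tau /\
  (forall ev, (tau ev).1 = (tau0 ev).1) /\
  (forall ev, (tau0 ev).1 != p -> tau ev = tau0 ev).

Definition max_min_fair (tau : timetable Room Period Event) : Prop :=
  room_reassignment tau /\
  forall tau', room_reassignment tau' -> msle (alloc I tau) (alloc I tau').

Definition matching_of (tau : timetable Room Period Event) : {set Course * Room} :=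
  [set (course_of I ev, (tau ev).2) | ev in [pred ev | (tau ev).1 == p]].

Definition perfect_matching (S : {set Course * Room}) : Prop :=
  (forall x, x \in S -> x.1 \in Cp) /\
  (forall e, e \in Cp -> #|[set x in S | x.1 == e]| = 1) /\
  (forall r : Room, #|[set x in S | x.2 == r]| = 1).

Definition assign (e : Course) (r : Room) : timetable Room Period Event :=
  fun ev => if ((tau0 ev).1 == p) && (course_of I ev == e) then (p, r) else tau0 ev.

Definition U_of (e : Course) : {set {set Course}} := [set u in curricula I | e \in u].

Definition weight (e : Course) (r : Room) : seq nat :=
  [seq penalty I u (assign e r) | u <- enum (U_of e)].

Definition total_weight (S : {set Course * Room}) : seq nat :=
  flatten [seq weight x.1 x.2 | x <- enum S].

Definition glbop_optimal (S : {set Course * Room}) : Prop :=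
  perfect_matching S /\
  forall S', perfect_matching S' -> msle (total_weight S) (total_weight S').

End Subproblem.

From mathcomp Require Import all_boot.
Set Implicit Arguments. Unset Strict Implicit. Unset Printing Implicit Defensive.

(* Fix a feasible timetable tau0 and a period p, and consider the feasible
   timetables tau that only move events of period p to other rooms.
   1. The multiset order msle is invariant under permutation and cancels a
      common part: msle (K ++ A) (K ++ B) = msle A B when |A| = |B|.
   2. The penalty of a curriculum u only depends on the events of courses of u.
      Since two courses of a curriculum never share a period, each curriculum
      meets the set C_p in at most one course e; its penalty under tau is then
      the penalty under tau0 with e moved to its tau-room r, i.e. a member of
      the weight w(e, r). Hence alloc tau is a permutation of K ++ w(M tau),
      where K collects the (fixed) penalties of curricula avoiding C_p and
      M tau is the matching of courses of C_p to their rooms.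
   3. Since |C_p| = |R|, tau |-> M tau maps reassignments onto perfect matchings.
   Comparing allocation vectors is thus comparing total weights of matchings,
   and max-min fairness becomes GLBOP optimality. *)

Lemma geq_total : total geq.
Proof. by move=> m n; apply: leq_total. Qed.

Lemma geq_trans : transitive geq.
Proof. by move=> y x z /= xy yz; apply: leq_trans yz xy. Qed.

Lemma geq_anti : antisymmetric geq.
Proof. by move=> x y /andP[xy yx]; apply/anti_leq/andP. Qed.

Lemma sort_geq_cons k s : sort geq (k :: s) = merge geq [:: k] (sort geq s).
Proof.
rewrite -[RHS](sorted_sort geq_trans); last first.
  by apply: (merge_sorted geq_total) => //; apply: (sort_sorted geq_total).
apply/(perm_sortP geq_total geq_trans geq_anti).
by rewrite perm_sym perm_merge /= perm_cons perm_sort.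
Qed.

Lemma lexle_insert k s t : size s = size t ->
  lexle (merge geq [:: k] s) (merge geq [:: k] t) = lexle s t.
Proof.
elim: s t => [|x s IH] [|y t] //=; first by rewrite ltnn eqxx.
move=> [size_st]; case: (leqP x k) => [xk|kx]; case: (leqP y k) => [yk|ky] /=.
- by rewrite ltnn eqxx.
- by rewrite ky (leq_ltn_trans xk ky).
- have yx := leq_ltn_trans yk kx.
  by rewrite ltnNge (ltnW kx) (gtn_eqF kx) ltnNge (ltnW yx) (gtn_eqF yx).
- by rewrite IH.
Qed.

Lemma msle_perm s s' t t' : perm_eq s s' -> perm_eq t t' -> msle s t = msle s' t'.
Proof.
move=> ss' tt'; rewrite /msle.
by rewrite (perm_sortP geq_total geq_trans geq_anti _ _ ss')
           (perm_sortP geq_total geq_trans geq_anti _ _ tt').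
Qed.

Lemma msle_catl K A B : size A = size B -> msle (K ++ A) (K ++ B) = msle A B.
Proof.
move=> sizeAB; elim: K => [|k K IH] //=.
by rewrite /msle !sort_geq_cons lexle_insert ?size_sort ?size_cat ?sizeAB.
Qed.

Section Reassignment.
Variables (Course Room Period Event : finType).
Variable I : instance Course Room Period Event.
Variables (tau0 : timetable Room Period Event) (p : Period).
Hypothesis tau0_feasible : feasible I tau0.

Local Notation CP := (Cp I tau0 p).
Local Notation M := (matching_of I p).
Local Notation reassignment := (room_reassignment I tau0 p).

Lemma penalty_local (u : {set Course}) (t t' : timetable Room Period Event) :
  (forall ev, course_of I ev \in u -> t ev = t' ev) -> penalty I u t = penalty I u t'.
Proof.
move=> tt'; rewrite /penalty /pen_RC /pen_MWD /pen_IL /pen_RS.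
congr (_ + _ + _ + _); congr (_ * _).
- by apply: eq_bigr => ev ev_u; rewrite tt'.
- apply: eq_bigr => c c_u; congr (_ - size (undup _)).
  apply/eq_in_map => ev; rewrite mem_filter => /andP[/eqP ev_c _].
  by rewrite tt' // ev_c.
- apply: eq_bigr => ev ev_u; congr (~~ _); apply: eq_existsb => ev'.
  by case ev'_u: (course_of I ev' \in u); rewrite //= !tt'.
- apply: eq_bigr => c c_u; congr (#|_| - 1); congr pred_of_set.
  by apply: eq_in_imset => ev; rewrite inE => /eqP ev_c; rewrite tt' // ev_c.
Qed.

Lemma course_in_Cp ev : (tau0 ev).1 == p -> course_of I ev \in CP.
Proof. by move=> ev_p; apply: imset_f. Qed.

Lemma Cp_event e : e \in CP -> exists2 ev, (tau0 ev).1 == p & e = course_of I ev.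
Proof. by case/imsetP => ev; rewrite inE => ev_p ->; exists ev. Qed.

Lemma feasible_event_inj (t : timetable Room Period Event) ev ev' : feasible I t ->
  (t ev).1 = (t ev').1 -> course_of I ev = course_of I ev' -> ev = ev'.
Proof.
move=> [distinct_periods _] same_period same_course; apply/eqP.
by apply: contraTT (eqxx (t ev).1) => neq; rewrite {2}same_period distinct_periods.
Qed.

(* A curriculum contains at most one course of C_p (curriculum conflicts). *)
Lemma curriculum_meets_Cp_once (u : {set Course}) c c' :
  u \in curricula I -> c \in CP -> c' \in CP -> c \in u -> c' \in u -> c = c'.
Proof.
move=> u_cur /Cp_event[ev ev_p ->] /Cp_event[ev' ev'_p ->] ev_u ev'_u.
apply/eqP; apply: contraTT (eqxx p) => neq.
have [_ [_ [conflicts _]]] := tau0_feasible.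
have shared : exists2 u, u \in curricula I &
    (course_of I ev \in u) && (course_of I ev' \in u).
  by exists u; rewrite ?ev_u.
by move: (conflicts ev ev' neq (or_introl shared)); rewrite (eqP ev_p) (eqP ev'_p).
Qed.

Lemma reassignment_period tau ev : reassignment tau -> (tau ev).1 = (tau0 ev).1.
Proof. by case=> _ []. Qed.

Lemma reassignment_outside tau ev : reassignment tau -> (tau0 ev).1 != p ->
  tau ev = tau0 ev.
Proof. by case=> _ [] _; apply. Qed.

Lemma reassignment_event_inj tau ev ev' : reassignment tau ->
  (tau0 ev).1 == p -> (tau0 ev').1 == p -> course_of I ev = course_of I ev' -> ev = ev'.
Proof.
move=> [tau_feasible [same_period _]] ev_p ev'_p.
apply: (feasible_event_inj tau_feasible).
by rewrite !same_period (eqP ev_p) (eqP ev'_p).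
Qed.

Lemma matching_edge tau x : reassignment tau -> x \in M tau ->
  exists2 ev, (tau0 ev).1 == p & x = (course_of I ev, (tau ev).2).
Proof.
move=> tauR /imsetP[ev]; rewrite inE => ev_p ->; exists ev => //.
by rewrite -(reassignment_period ev tauR).
Qed.

Lemma edge_in_matching tau ev : reassignment tau -> (tau0 ev).1 == p ->
  (course_of I ev, (tau ev).2) \in M tau.
Proof. by move=> tauR ev_p; apply: imset_f; rewrite inE (reassignment_period ev tauR). Qed.

Lemma matching_course_in_Cp tau x : reassignment tau -> x \in M tau -> x.1 \in CP.
Proof. by move=> tauR /(matching_edge tauR)[ev ev_p ->]; apply: course_in_Cp. Qed.

Lemma matching_course_inj tau x y : reassignment tau ->
  x \in M tau -> y \in M tau -> x.1 = y.1 -> x = y.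
Proof.
move=> tauR /(matching_edge tauR)[ev ev_p ->] /(matching_edge tauR)[ev' ev'_p ->] /= same.
by rewrite (reassignment_event_inj tauR ev_p ev'_p same).
Qed.

(* If the edge {e, r} is in M tau and e is in u, then c_{e -> r}(u) = c(u, tau):
   the only events of u in period p are those of e. *)
Lemma penalty_assign tau (u : {set Course}) x : reassignment tau ->
  u \in curricula I -> x \in M tau -> x.1 \in u ->
  penalty I u (assign I tau0 p x.1 x.2) = penalty I u tau.
Proof.
move=> tauR u_cur x_M x_u; apply: penalty_local => ev ev_u; rewrite /assign.
case ev_p: ((tau0 ev).1 == p) => /=; last by rewrite (reassignment_outside tauR) ?ev_p.
case: eqP => [ev_x|ev_nx]; last first.
  by case: ev_nx; apply: (curriculum_meets_Cp_once u_cur (course_in_Cp ev_p)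
    (matching_course_in_Cp tauR x_M) ev_u x_u).
have [ev' ev'_p x_ev'] := matching_edge tauR x_M.
rewrite x_ev' /= in ev_x *.
rewrite -(reassignment_event_inj tauR ev_p ev'_p ev_x).
by rewrite [RHS]surjective_pairing (reassignment_period ev tauR) (eqP ev_p).
Qed.

(* Curricula meeting C_p; the others have the same penalty in every reassignment. *)
Definition meets_Cp (u : {set Course}) : bool := [exists e, (e \in CP) && (e \in u)].

(* The common part K of all allocation vectors. *)
Definition fixed_penalties : seq nat :=
  [seq penalty I u tau0 | u <- [seq u <- enum (curricula I) | ~~ meets_Cp u]].

Lemma penalty_avoiding_Cp tau u : reassignment tau -> ~~ meets_Cp u ->
  penalty I u tau = penalty I u tau0.
Proof.
move=> tauR u_avoids; apply: penalty_local => ev ev_u.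
apply: (reassignment_outside tauR); apply: contra u_avoids => ev_p.
by apply/existsP; exists (course_of I ev); rewrite course_in_Cp.
Qed.

Definition matched_curricula tau : seq {set Course} :=
  flatten [seq enum (U_of I x.1) | x <- enum (M tau)].

(* Distinct matched courses have disjoint sets U_e. *)
Lemma matched_curricula_uniq tau : reassignment tau -> uniq (matched_curricula tau).
Proof.
move=> tauR; rewrite /matched_curricula.
have : {subset enum (M tau) <= M tau} by move=> x; rewrite mem_enum.
elim: (enum (M tau)) (enum_uniq (mem (M tau))) => [|x s IH] //= /andP[x_s s_uniq] sub.
rewrite cat_uniq enum_uniq IH ?s_uniq //=; last by move=> y y_s; rewrite sub // inE y_s orbT.
have x_M : x \in M tau by rewrite sub ?mem_head.
rewrite andbT; apply/hasPn => u /flattenP[l /mapP[y y_s ->]].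
rewrite !mem_enum !inE => /andP[u_cur y_u]; apply: contra x_s => /andP[_ x_u].
have y_M : y \in M tau by rewrite sub // inE y_s orbT.
have := curriculum_meets_Cp_once u_cur (matching_course_in_Cp tauR x_M)
  (matching_course_in_Cp tauR y_M) x_u y_u.
by move=> same; rewrite (matching_course_inj tauR x_M y_M same).
Qed.

Lemma mem_matched_curricula tau u : reassignment tau ->
  (u \in matched_curricula tau) = (u \in curricula I) && meets_Cp u.
Proof.
move=> tauR; apply/flattenP/andP => [[l /mapP[x]]|[u_cur /existsP[e /andP[e_Cp e_u]]]].
  rewrite mem_enum => x_M -> /[!(mem_enum, inE)] /andP[u_cur x_u]; split=> //.
  by apply/existsP; exists x.1; rewrite x_u (matching_course_in_Cp tauR).
have [ev ev_p e_ev] := Cp_event e_Cp.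
exists (enum (U_of I e)); last by rewrite mem_enum inE u_cur.
by apply/mapP; exists (course_of I ev, (tau ev).2); rewrite ?mem_enum ?edge_in_matching ?e_ev.
Qed.

Lemma total_weight_matching tau : reassignment tau ->
  total_weight I tau0 p (M tau) = [seq penalty I u tau | u <- matched_curricula tau].
Proof.
move=> tauR; rewrite map_flatten /total_weight -map_comp; congr flatten.
apply/eq_in_map => x; rewrite mem_enum => x_M /=.
by apply/eq_in_map => u; rewrite mem_enum inE => /andP[u_cur x_u]; apply: penalty_assign.
Qed.

Lemma alloc_decomposition tau : reassignment tau ->
  perm_eq (alloc I tau) (fixed_penalties ++ total_weight I tau0 p (M tau)).
Proof.
move=> tauR; rewrite total_weight_matching //.
have -> : fixed_penalties =
    [seq penalty I u tau | u <- [seq u <- enum (curricula I) | ~~ meets_Cp u]].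
  by apply/eq_in_map => u; rewrite mem_filter => /andP[u_avoids _];
     rewrite penalty_avoiding_Cp.
rewrite -map_cat; apply: perm_map.
rewrite -(perm_filterC meets_Cp) perm_catC; apply: perm_cat; first exact: perm_refl.
apply: uniq_perm; [exact/filter_uniq/enum_uniq | exact: matched_curricula_uniq |].
by move=> u; rewrite mem_filter mem_enum mem_matched_curricula // andbC.
Qed.

Lemma msle_alloc_total_weight tau tau' : reassignment tau -> reassignment tau' ->
  msle (alloc I tau) (alloc I tau') =
  msle (total_weight I tau0 p (M tau)) (total_weight I tau0 p (M tau')).
Proof.
move=> tauR tau'R.
have decomp := alloc_decomposition tauR; have decomp' := alloc_decomposition tau'R.
rewrite (msle_perm decomp decomp') msle_catl //.
apply/eqP; rewrite -(eqn_add2l (size fixed_penalties)) -!size_cat.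
by rewrite -(perm_size decomp) -(perm_size decomp') /alloc !size_map.
Qed.

End Reassignment.

Lemma card1_unique (T : finType) (A : eqType) (S : {set T}) (f : T -> A) a x y :
  #|[set z in S | f z == a]| = 1 -> x \in S -> y \in S -> f x = a -> f y = a -> x = y.
Proof.
move=> /eqP/cards1P[z Sa] x_S y_S fx fy.
have : x \in [set z in S | f z == a] by rewrite inE x_S fx eqxx.
have : y \in [set z in S | f z == a] by rewrite inE y_S fy eqxx.
by rewrite Sa !inE => /eqP -> /eqP ->.
Qed.

Section Matchings.
Variables (Course Room Period Event : finType).
Variable I : instance Course Room Period Event.
Variables (tau0 : timetable Room Period Event) (p : Period).
Hypothesis tau0_feasible : feasible I tau0.
Hypothesis card_Cp : #|Cp I tau0 p| = #|Room|.

Local Notation CP := (Cp I tau0 p).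
Local Notation M := (matching_of I p).
Local Notation reassignment := (room_reassignment I tau0 p).

Lemma reassignment_room_inj tau ev ev' : reassignment tau ->
  (tau0 ev).1 == p -> (tau0 ev').1 == p -> (tau ev).2 = (tau ev').2 -> ev = ev'.
Proof.
move=> tauR ev_p ev'_p same_room; case: (eqVneq ev ev') => // neq.
have [[_ [occupancy _]] _] := tauR.
suff same : tau ev = tau ev' by move: (occupancy _ _ neq); rewrite same eqxx.
rewrite [tau ev]surjective_pairing [tau ev']surjective_pairing same_room.
by rewrite !(reassignment_period _ tauR) (eqP ev_p) (eqP ev'_p).
Qed.

(* As |C_p| = |R|, the events of period p occupy every room. *)
Lemma reassignment_rooms_onto tau r : reassignment tau ->
  exists2 ev, (tau0 ev).1 == p & r = (tau ev).2.
Proof.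
move=> tauR; pose D := [pred ev | (tau0 ev).1 == p].
have card_rooms : #|[set (tau ev).2 | ev in D]| = #|Room|.
  rewrite card_in_imset => [|ev ev']; last by rewrite !inE; apply: reassignment_room_inj.
  rewrite -card_Cp /Cp card_in_imset // => ev ev'; rewrite !inE => ev_p ev'_p.
  by apply: (feasible_event_inj tau0_feasible); rewrite (eqP ev_p) (eqP ev'_p).
have : r \in [set (tau ev).2 | ev in D].
  suff -> : [set (tau ev).2 | ev in D] = [set: Room] by rewrite inE.
  by apply/eqP; rewrite eqEcard subsetT cardsT /= card_rooms.
by case/imsetP => ev; rewrite inE => ev_p ->; exists ev.
Qed.

Lemma reassignment_perfect tau : reassignment tau -> perfect_matching I tau0 p (M tau).
Proof.
move=> tauR; split; first by move=> x; apply: matching_course_in_Cp.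
split=> [e /Cp_event[ev ev_p ->]|r].
  apply/eqP/cards1P; exists (course_of I ev, (tau ev).2); apply/setP => x.
  rewrite !inE; apply/andP/eqP => [[x_M /eqP x_ev]|->]; last first.
    by rewrite (edge_in_matching tauR ev_p).
  by apply: (matching_course_inj tauR x_M (edge_in_matching tauR ev_p)).
have [ev ev_p ->] := reassignment_rooms_onto r tauR.
apply/eqP/cards1P; exists (course_of I ev, (tau ev).2); apply/setP => x.
rewrite !inE; apply/andP/eqP => [[/(matching_edge tauR)[ev' ev'_p ->] /eqP /= same]|->].
  by rewrite (reassignment_room_inj tauR ev'_p ev_p same).
by rewrite (edge_in_matching tauR ev_p).
Qed.

Variable S : {set Course * Room}.
Hypothesis S_perfect : perfect_matching I tau0 p S.

(* The room matched by S to the course of ev (arbitrary if there is none). *)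
Definition matched_room (ev : Event) : Room :=
  if [pick x in S | x.1 == course_of I ev] is Some x then x.2 else (tau0 ev).2.

Definition timetable_of_matching : timetable Room Period Event :=
  fun ev => if (tau0 ev).1 == p then ((tau0 ev).1, matched_room ev) else tau0 ev.

Lemma matched_room_edge ev : (tau0 ev).1 == p -> (course_of I ev, matched_room ev) \in S.
Proof.
move=> ev_p; rewrite /matched_room; case: pickP => [[e r] /andP[x_S /eqP /= <-] //|none].
have [_ [one_edge _]] := S_perfect.
have /eqP/cards1P[x S_ev] := one_edge _ (course_in_Cp I ev_p).
have : x \in [set y in S | y.1 == course_of I ev] by rewrite S_ev set11.
by rewrite inE none.
Qed.

Lemma matching_edge_inj x y : x \in S -> y \in S -> x.1 = y.1 \/ x.2 = y.2 -> x = y.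
Proof.
have [S_Cp [one_course one_room]] := S_perfect.
move=> x_S y_S [same|same].
  by apply: (card1_unique (one_course _ (S_Cp _ x_S))).
by apply: (card1_unique (one_room x.2)).
Qed.

Lemma timetable_of_matching_period ev : (timetable_of_matching ev).1 = (tau0 ev).1.
Proof. by rewrite /timetable_of_matching; case: ifP. Qed.

Lemma timetable_of_matching_in_p ev : (tau0 ev).1 == p ->
  timetable_of_matching ev = ((tau0 ev).1, matched_room ev).
Proof. by rewrite /timetable_of_matching => ->. Qed.

(* The events of period p are placed in distinct rooms, since S matches
   distinct courses to distinct rooms. *)
Lemma timetable_of_matching_occupancy ev ev' : ev != ev' ->
  timetable_of_matching ev != timetable_of_matching ev'.
Proof.
move=> neq; apply/eqP => same.
have same_period := congr1 fst same; rewrite !timetable_of_matching_period in same_period.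
have [_ [occupancy _]] := tau0_feasible.
case ev_p: ((tau0 ev).1 == p); last first.
  move: same; rewrite /timetable_of_matching -same_period ev_p => same.
  by move: (occupancy _ _ neq); rewrite same eqxx.
have ev'_p : (tau0 ev').1 == p by rewrite -same_period.
move: same; rewrite !timetable_of_matching_in_p // => -[_ same_room].
have [same_course _] : course_of I ev = course_of I ev' /\ matched_room ev = matched_room ev'.
  by apply/pair_equal_spec/matching_edge_inj; rewrite ?matched_room_edge //; right.
by move: neq; rewrite (feasible_event_inj tau0_feasible same_period same_course) eqxx.
Qed.

Lemma timetable_of_matching_reassignment : reassignment timetable_of_matching.
Proof.
have [distinct_periods [_ [conflicts available]]] := tau0_feasible.
split; last split; [|exact: timetable_of_matching_period|].
- split=> [ev ev'|]; first by rewrite !timetable_of_matching_period; apply: distinct_periods.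
  split; first exact: timetable_of_matching_occupancy.
  split=> [ev ev'|ev]; rewrite !timetable_of_matching_period; [exact: conflicts|exact: available].
- by move=> ev /negbTE ev_np; rewrite /timetable_of_matching ev_np.
Qed.

Lemma matching_of_timetable_of_matching : M timetable_of_matching = S.
Proof.
have [S_Cp _] := S_perfect.
apply/setP => x; apply/imsetP/idP => [[ev]|x_S].
  rewrite inE timetable_of_matching_period => ev_p ->.
  by rewrite timetable_of_matching_in_p //; apply: matched_room_edge.
have [ev ev_p x_ev] := Cp_event (S_Cp _ x_S).
exists ev; first by rewrite inE timetable_of_matching_period.
rewrite timetable_of_matching_in_p //=.
by apply: matching_edge_inj; rewrite ?matched_room_edge //; left.
Qed.

End Matchings.

Theorem theorem2 (Course Room Period Event : finType)
  (I : instance Course Room Period Event)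
  (tau0 : timetable Room Period Event) (p : Period) :
  feasible I tau0 ->
  #|Cp I tau0 p| = #|Room| ->
  (* room assignments of period p correspond to perfect matchings *)
  (forall tau, room_reassignment I tau0 p tau ->
     perfect_matching I tau0 p (matching_of I p tau)) /\
  (forall S, perfect_matching I tau0 p S ->
     exists2 tau, room_reassignment I tau0 p tau & matching_of I p tau = S) /\
  (* and max-min fairness coincides with GLBOP optimality *)
  (forall tau, room_reassignment I tau0 p tau ->
     (max_min_fair I tau0 p tau <-> glbop_optimal I tau0 p (matching_of I p tau))).
Proof.
move=> tau0_feasible card_Cp.
have perfect := reassignment_perfect tau0_feasible card_Cp.
have onto S (S_perfect : perfect_matching I tau0 p S) :
    exists2 tau, room_reassignment I tau0 p tau & matching_of I p tau = S.
  exists (timetable_of_matching I tau0 p S).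
    exact: timetable_of_matching_reassignment.
  exact: matching_of_timetable_of_matching.
split=> //; split=> // tau tauR; split=> [[_ fair]|[_ optimal]].
  split=> [|S' /onto[tau' tau'R <-]]; first exact: perfect.
  by rewrite -(msle_alloc_total_weight tau0_feasible tauR tau'R) fair.
split=> // tau' tau'R.
by rewrite (msle_alloc_total_weight tau0_feasible tauR tau'R); apply/optimal/perfect.
Qed.
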